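(* Let $k\in\mathbb N$ and $f\in\mathcal R^{k+1}_{[1]}(\mathbb R^2)$. Then for every $v\in\mathbb R^2$, the partial derivative $\partial_v f$ belongs to $\mathcal R^k_{[1]}(\mathbb R^2)$.
   Context: For $k\in\mathbb N\cup\{\infty\}$, $\mathcal R^k(\mathbb R^2)$ denotes the ring of functions $f:\mathbb R^2\to\mathbb R$ of class $C^k$ that coincide with $p/q$ ($p,q$ polynomials, $q$ nonvanishing there) on some nonempty Zariski open set. For $l\in\mathbb N$: consider compositions $\pi:M\to\mathbb R^2$ of successive blowings-up $M_i\to M_{i-1}$ ($M_0=\mathbb R^2$), each centred at points. An infinitely near point of order $j$ is a sequence $a_0\in M_0,\dots,a_j\in M_j$ where $M_i$ is the blowing-up of $M_{i-1}$ at $a_{i-1}$ and $a_i$ maps to $a_{i-1}$; the number of stages of $\pi$ is the maximal order of infinitely near points in $M$. $\mathcal R^k_{[l]}(\mathbb R^2)$ is the set of $f\in\mathcal R^k(\mathbb R^2)$ for which there is such a $\pi$ with at most $l$ stages such that $f\circ\pi$ is regular on $M$. $\partial_v f$ denotes the directional derivative of $f$ in direction $v$. *)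

From Stdlib Require Import Reals List.
Open Scope R_scope.

Inductive is_poly2 : (R -> R -> R) -> Prop :=
| poly2_const (c : R) : is_poly2 (fun _ _ => c)
| poly2_X : is_poly2 (fun x _ => x)
| poly2_Y : is_poly2 (fun _ y => y)
| poly2_add (p q : R -> R -> R) :
    is_poly2 p -> is_poly2 q -> is_poly2 (fun x y => p x y + q x y)
| poly2_mul (p q : R -> R -> R) :
    is_poly2 p -> is_poly2 q -> is_poly2 (fun x y => p x y * q x y).

Definition continuous2 (f : R -> R -> R) : Prop :=
  forall x y eps, 0 < eps -> exists delta, 0 < delta /\
    forall x' y', Rabs (x' - x) < delta -> Rabs (y' - y) < delta ->
      Rabs (f x' y' - f x y) < eps.

Fixpoint Ck2 (k : nat) (f : R -> R -> R) : Prop :=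
  match k with
  | O => continuous2 f
  | S k' => exists fx fy : R -> R -> R,
      (forall x y, derivable_pt_lim (fun t => f t y) x (fx x y)) /\
      (forall x y, derivable_pt_lim (fun t => f x t) y (fy x y)) /\
      Ck2 k' fx /\ Ck2 k' fy
  end.

(** f coincides with p/q (q nonvanishing) on a nonempty Zariski open set
    (here the basic open set {g <> 0}, g a nonzero polynomial). *)
Definition rational2 (f : R -> R -> R) : Prop :=
  exists p q g, is_poly2 p /\ is_poly2 q /\ is_poly2 g /\
    (exists x y, g x y <> 0) /\
    forall x y, g x y <> 0 -> q x y <> 0 /\ f x y = p x y / q x y.

Definition Rk (k : nat) (f : R -> R -> R) : Prop := Ck2 k f /\ rational2 f.

Definition regular_on (U : R -> R -> Prop) (g : R -> R -> R) : Prop :=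
  forall x y, U x y -> exists p q, is_poly2 p /\ is_poly2 q /\ q x y <> 0 /\
    forall x' y', U x' y' -> q x' y' <> 0 -> g x' y' = p x' y' / q x' y'.

(** The two standard affine charts (each a copy of R^2) of the blowing-up
    of R^2 at the point a. *)
Definition chart1 (a : R * R) (u w : R) : R * R := (fst a + u, snd a + u * w).
Definition chart2 (a : R * R) (u w : R) : R * R := (fst a + u * w, snd a + w).

(** Regularity of f o pi on M, where pi : M -> R^2 is the blowing-up of R^2
    at the finitely many distinct points of A (a one-stage composition of
    point blowings-up). M is covered by pi^{-1}(R^2 \ A) ~ R^2 \ A and, for
    each a in A, the two charts of the blowing-up at a, restricted to the
    complement of the preimages of the other centres. *)
Definition chart_dom (A : list (R * R)) (a : R * R)
    (ch : R * R -> R -> R -> R * R) : R -> R -> Prop :=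
  fun u w => forall b, In b A -> b <> a -> ch a u w <> b.

Definition regular_after_blowup (A : list (R * R)) (f : R -> R -> R) : Prop :=
  NoDup A /\
  regular_on (fun x y => ~ In (x, y) A) f /\
  forall a, In a A ->
    regular_on (chart_dom A a chart1)
      (fun u w => f (fst (chart1 a u w)) (snd (chart1 a u w))) /\
    regular_on (chart_dom A a chart2)
      (fun u w => f (fst (chart2 a u w)) (snd (chart2 a u w))).

Definition Rk1 (k : nat) (f : R -> R -> R) : Prop :=
  Rk k f /\ exists A : list (R * R), regular_after_blowup A f.

Definition dirderiv (f : R -> R -> R) (v : R * R) (g : R -> R -> R) : Prop :=
  forall x y, derivable_pt_lim (fun t => f (x + t * fst v) (y + t * snd v)) 0 (g x y).

From Stdlib Require Import Reals List Lra Classical FunctionalExtensionality.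
From Coquelicot Require Import Coquelicot.
Open Scope R_scope.

(* Write g = v1 fx + v2 fy.  It is C^k, and wherever f = P/Q the quotient rule
   gives g = N/Q^2 with N polynomial; the same argument shows that g is regular
   away from the blown-up points.  In the chart (u, w) |-> (a1 + u, a2 + u w)
   the function F = f o chart has partials F_u = fx o chart + w (fy o chart)
   and F_w = u (fy o chart), both regular.  A regular function of the form
   u D with D continuous has a numerator vanishing on the exceptional divisor
   u = 0, hence divisible by u, so D = fy o chart is regular (across u = 0 by
   continuity); then fx o chart = F_u - w (fy o chart) is regular as well.
   The second chart is the first one with the coordinates exchanged. *)

Lemma is_poly2_ext p q : is_poly2 p -> (forall x y, p x y = q x y) -> is_poly2 q.
Proof.
  intros hp E. replace q with p; [exact hp|].
  apply functional_extensionality; intro x; apply functional_extensionality; intro y.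
  apply E.
Qed.

Lemma is_poly2_sub p q :
  is_poly2 p -> is_poly2 q -> is_poly2 (fun x y => p x y - q x y).
Proof.
  intros hp hq. apply (is_poly2_ext (fun x y => p x y + (-1) * q x y)).
  - apply poly2_add; [exact hp|]. apply poly2_mul; [apply poly2_const | exact hq].
  - intros; ring.
Qed.

Lemma is_poly2_swap p : is_poly2 p -> is_poly2 (fun x y => p y x).
Proof. induction 1; constructor; assumption. Qed.

Lemma is_poly2_axis p : is_poly2 p -> is_poly2 (fun _ w => p 0 w).
Proof. induction 1; constructor; assumption. Qed.

Lemma is_poly2_axis_split p :
  is_poly2 p -> exists m, is_poly2 m /\ forall u w, p u w = p 0 w + u * m u w.
Proof.
  induction 1 as [c| | |p q _ [m1 [hm1 E1]] _ [m2 [hm2 E2]]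
                 |p q hp [m1 [hm1 E1]] hq [m2 [hm2 E2]]].
  - exists (fun _ _ => 0). split; [constructor | intros; ring].
  - exists (fun _ _ => 1). split; [constructor | intros; ring].
  - exists (fun _ _ => 0). split; [constructor | intros; ring].
  - exists (fun u w => m1 u w + m2 u w). split; [constructor; assumption|].
    intros u w. rewrite (E1 u w), (E2 u w). ring.
  - exists (fun u w => m1 u w * q u w + p 0 w * m2 u w). split.
    + repeat constructor; try assumption. apply is_poly2_axis; exact hp.
    + intros u w. rewrite (E1 u w), (E2 u w). ring.
Qed.

Lemma is_poly2_continuity p : is_poly2 p -> forall x y, continuity_2d_pt p x y.
Proof.
  induction 1; intros.
  - apply continuity_2d_pt_const.
  - apply continuity_2d_pt_id1.
  - apply continuity_2d_pt_id2.
  - apply continuity_2d_pt_plus; auto.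
  - apply continuity_2d_pt_mult; auto.
Qed.

Lemma is_poly2_partial_x p : is_poly2 p ->
  exists px, is_poly2 px /\ forall x y, derivable_pt_lim (fun t => p t y) x (px x y).
Proof.
  induction 1 as [c| | |p q _ [m1 [hm1 E1]] _ [m2 [hm2 E2]]
                 |p q hp [m1 [hm1 E1]] hq [m2 [hm2 E2]]].
  - exists (fun _ _ => 0). split; [constructor | intros; apply derivable_pt_lim_const].
  - exists (fun _ _ => 1). split; [constructor | intros; apply derivable_pt_lim_id].
  - exists (fun _ _ => 0). split; [constructor | intros; apply derivable_pt_lim_const].
  - exists (fun x y => m1 x y + m2 x y). split; [constructor; assumption|].
    intros x y. apply (derivable_pt_lim_plus (fun t => p t y) (fun t => q t y)); auto.
  - exists (fun x y => m1 x y * q x y + p x y * m2 x y). split; [repeat constructor; assumption|].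
    intros x y. apply (derivable_pt_lim_mult (fun t => p t y) (fun t => q t y)); auto.
Qed.

Lemma is_poly2_partial_y p : is_poly2 p ->
  exists py, is_poly2 py /\ forall x y, derivable_pt_lim (fun t => p x t) y (py x y).
Proof.
  intro hp. destruct (is_poly2_partial_x _ (is_poly2_swap _ hp)) as [m [hm E]].
  exists (fun x y => m y x). split; [apply is_poly2_swap; exact hm|].
  intros x y. exact (E y x).
Qed.

Ltac poly := repeat first [ assumption | apply poly2_X | apply poly2_Y | apply poly2_const
  | apply is_poly2_sub | apply poly2_add | apply poly2_mul ].

Definition open2 (U : R -> R -> Prop) : Prop := forall x y, U x y -> locally_2d U x y.

Lemma open2_swap U : open2 U -> open2 (fun x y => U y x).
Proof.
  intros HU x y Hxy. destruct (HU y x Hxy) as [d Hd].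
  exists d. intros u v Hu Hv. exact (Hd v u Hv Hu).
Qed.

Lemma continuous2_iff h : continuous2 h <-> forall x y, continuity_2d_pt h x y.
Proof.
  split.
  - intros H x y eps. destruct (H x y eps (cond_pos eps)) as [d [Hd H']].
    exists (mkposreal d Hd). exact H'.
  - intros H x y eps Heps. destruct (H x y (mkposreal eps Heps)) as [d Hd].
    exists d. split; [apply cond_pos | exact Hd].
Qed.

Lemma continuity_2d_pt_comp (g h1 h2 : R -> R -> R) u w :
  (forall x y, continuity_2d_pt g x y) ->
  continuity_2d_pt h1 u w -> continuity_2d_pt h2 u w ->
  continuity_2d_pt (fun s t => g (h1 s t) (h2 s t)) u w.
Proof.
  intros Cg C1 C2 eps. destruct (Cg (h1 u w) (h2 u w) eps) as [d Hd].
  apply locally_2d_impl with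
    (fun s t => Rabs (h1 s t - h1 u w) < d /\ Rabs (h2 s t - h2 u w) < d).
  { apply locally_2d_forall. intros s t [H1 H2]. exact (Hd _ _ H1 H2). }
  apply locally_2d_and; [apply C1 | apply C2].
Qed.

Lemma continuity_2d_pt_div (p q : R -> R -> R) x y :
  continuity_2d_pt p x y -> continuity_2d_pt q x y -> q x y <> 0 ->
  continuity_2d_pt (fun u v => p u v / q u v) x y.
Proof.
  intros Cp Cq Hq. apply continuity_2d_pt_mult; [exact Cp|].
  apply continuity_2d_pt_inv; assumption.
Qed.

Lemma continuity_2d_pt_eq_off_line h1 h2 x y :
  continuity_2d_pt h1 x y -> continuity_2d_pt h2 x y ->
  locally_2d (fun u v => u <> x -> h1 u v = h2 u v) x y -> h1 x y = h2 x y.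
Proof.
  intros C1 C2 Heq.
  destruct (Req_dec (h1 x y) (h2 x y)) as [E|Hne]; [exact E|exfalso].
  assert (Hd : 0 < Rabs (h1 x y - h2 x y) / 2).
  { assert (0 < Rabs (h1 x y - h2 x y)) by (apply Rabs_pos_lt; lra). lra. }
  assert (Hloc := locally_2d_and _ _ x y (C1 (mkposreal _ Hd))
                    (locally_2d_and _ _ x y (C2 (mkposreal _ Hd)) Heq)).
  apply locally_2d_1d_const_y in Hloc.
  destruct (filter_ex (F := Rbar_locally' x)
              (fun t => t <> x /\ Rabs (h1 t y - h1 x y) < Rabs (h1 x y - h2 x y) / 2
                        /\ Rabs (h2 t y - h2 x y) < Rabs (h1 x y - h2 x y) / 2
                        /\ (t <> x -> h1 t y = h2 t y)))
    as [t [Ht [B1 [B2 Et]]]].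
  { apply filter_imp with (2 := Hloc). intros t H Ht. split; [exact Ht | exact H]. }
  rewrite (Et Ht) in B1. revert B1 B2. split_Rabs; lra.
Qed.

Lemma locally_2d_neq_pt (h : R -> R -> R * R) b u w :
  continuity_2d_pt (fun s t => fst (h s t)) u w ->
  continuity_2d_pt (fun s t => snd (h s t)) u w ->
  h u w <> b -> locally_2d (fun s t => h s t <> b) u w.
Proof.
  intros C1 C2 Hne.
  destruct (Req_dec (fst (h u w)) (fst b)) as [E1|E1].
  - apply locally_2d_impl with (fun s t => snd (h s t) - snd b <> 0).
    { apply locally_2d_forall. intros s t Hd E. apply Hd. rewrite E. ring. }
    apply continuity_2d_pt_neq_0.
    + apply continuity_2d_pt_minus; [exact C2 | apply continuity_2d_pt_const].
    + intro E2. apply Hne. destruct (h u w), b; simpl in *. f_equal; lra.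
  - apply locally_2d_impl with (fun s t => fst (h s t) - fst b <> 0).
    { apply locally_2d_forall. intros s t Hd E. apply Hd. rewrite E. ring. }
    apply continuity_2d_pt_neq_0.
    + apply continuity_2d_pt_minus; [exact C1 | apply continuity_2d_pt_const].
    + intro E. apply E1. lra.
Qed.

Lemma open2_avoid (L : list (R * R)) (P : R * R -> Prop) (h : R -> R -> R * R) :
  (forall u w, continuity_2d_pt (fun s t => fst (h s t)) u w) ->
  (forall u w, continuity_2d_pt (fun s t => snd (h s t)) u w) ->
  open2 (fun u w => forall b, In b L -> P b -> h u w <> b).
Proof.
  intros C1 C2 u w. induction L as [|b0 L IH]; intros H.
  - apply locally_2d_forall. intros s t b [].
  - apply locally_2d_impl with
      (fun s t => (P b0 -> h s t <> b0) /\ forall b, In b L -> P b -> h s t <> b).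
    { apply locally_2d_forall. intros s t [H0 HL] b [<-|Hb]; auto. }
    apply locally_2d_and.
    + destruct (classic (P b0)) as [Pb0|nPb0].
      * apply locally_2d_impl with (fun s t => h s t <> b0).
        { apply locally_2d_forall. auto. }
        apply locally_2d_neq_pt; auto. apply H; [left|]; auto.
      * apply locally_2d_forall. intros; contradiction.
    + apply IH. intros b Hb. apply H. right; exact Hb.
Qed.

Lemma derivable_pt_lim_affine (g : R -> R) b s :
  (forall t, g t = g 0 + b * t) -> derivable_pt_lim g s b.
Proof.
  intros E eps Heps. exists (mkposreal 1 Rlt_0_1). intros h Hh _.
  rewrite (E (s + h)), (E s). replace ((g 0 + b * (s + h) - (g 0 + b * s)) / h - b) with 0 by (field; exact Hh).
  rewrite Rabs_R0. exact Heps.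
Qed.

Lemma derivable_pt_lim_quotient_loc (g p q : R -> R) x lg lp lq :
  locally x (fun t => q t <> 0 /\ g t = p t / q t) ->
  derivable_pt_lim g x lg -> derivable_pt_lim p x lp -> derivable_pt_lim q x lq ->
  lg = (lp * q x - p x * lq) / (q x * q x).
Proof.
  intros Hloc Hg Hp Hq. destruct (locally_singleton _ _ Hloc) as [Hqx _].
  assert (D : is_derive g x ((lp * q x - p x * lq) / q x ^ 2)).
  { apply is_derive_ext_loc with (fun t => p t / q t).
    - apply filter_imp with (2 := Hloc). intros t [_ E]. symmetry. exact E.
    - apply is_derive_div; [apply is_derive_Reals; assumption ..| exact Hqx]. }
  apply is_derive_Reals in D. rewrite (uniqueness_limite _ _ _ _ Hg D). field. exact Hqx.
Qed.

Lemma increment_bound_MVT (g g' : R -> R) a b l e :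
  (forall t, derivable_pt_lim g t (g' t)) ->
  (forall c, Rmin a b <= c <= Rmax a b -> Rabs (g' c - l) <= e) ->
  Rabs (g b - g a - l * (b - a)) <= e * Rabs (b - a).
Proof.
  intros Hg Hbound. destruct (Rtotal_order a b) as [Hab|[<-|Hab]].
  - destruct (MVT_cor2 g g' a b Hab) as [c [Ec Hc]]; [intros; apply Hg|].
    replace (g b - g a - l * (b - a)) with ((g' c - l) * (b - a)) by lra.
    rewrite Rabs_mult. apply Rmult_le_compat_r; [apply Rabs_pos|].
    apply Hbound. rewrite Rmin_left, Rmax_right; lra.
  - replace (g a - g a - l * (a - a)) with 0 by ring.
    replace (a - a) with 0 by ring. rewrite Rabs_R0, Rmult_0_r. apply Rle_refl.
  - destruct (MVT_cor2 g g' b a Hab) as [c [Ec Hc]]; [intros; apply Hg|].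
    replace (g b - g a - l * (b - a)) with ((g' c - l) * (b - a)) by lra.
    rewrite Rabs_mult. apply Rmult_le_compat_r; [apply Rabs_pos|].
    apply Hbound. rewrite Rmin_right, Rmax_left; lra.
Qed.

Definition has_C1_partials (f fx fy : R -> R -> R) : Prop :=
  (forall x y, derivable_pt_lim (fun t => f t y) x (fx x y)) /\
  (forall x y, derivable_pt_lim (fun t => f x t) y (fy x y)) /\
  (forall x y, continuity_2d_pt fx x y) /\ (forall x y, continuity_2d_pt fy x y).

Lemma has_C1_partials_swap f fx fy : has_C1_partials f fx fy ->
  has_C1_partials (fun x y => f y x) (fun x y => fy y x) (fun x y => fx y x).
Proof.
  intros [Hx [Hy [Cx Cy]]]. repeat split; intros x y.
  - exact (Hy y x).
  - exact (Hx y x).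
  - apply (continuity_2d_pt_comp fy (fun _ v => v) (fun u _ => u));
      [exact Cy | apply continuity_2d_pt_id2 | apply continuity_2d_pt_id1].
  - apply (continuity_2d_pt_comp fx (fun _ v => v) (fun u _ => u));
      [exact Cx | apply continuity_2d_pt_id2 | apply continuity_2d_pt_id1].
Qed.

(* Only the continuity of fx is needed: the mean value theorem handles the
   horizontal increment, the existence of fy the vertical one. *)
Lemma has_C1_partials_differentiable f fx fy : has_C1_partials f fx fy ->
  forall x y, differentiable_pt_lim f x y (fx x y) (fy x y).
Proof.
  intros [Hfx [Hfy [Cfx _]]] x y eps.
  assert (he2 : 0 < eps / 2) by (generalize (cond_pos eps); lra).
  destruct (Cfx x y (mkposreal _ he2)) as [d1 Hd1].
  destruct (Hfy x y (eps / 2) he2) as [d2 Hd2].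
  assert (Hd : 0 < Rmin d1 d2) by (apply Rmin_pos; apply cond_pos).
  exists (mkposreal _ Hd). intros u v Hu Hv. simpl in Hu, Hv, Hd1.
  assert (Hu1 := Rlt_le_trans _ _ _ Hu (Rmin_l d1 d2)).
  assert (Hv1 := Rlt_le_trans _ _ _ Hv (Rmin_l d1 d2)).
  assert (Hv2 := Rlt_le_trans _ _ _ Hv (Rmin_r d1 d2)).
  assert (Horiz : Rabs (f u v - f x v - fx x y * (u - x)) <= eps / 2 * Rabs (u - x)).
  { apply (increment_bound_MVT (fun s => f s v) (fun s => fx s v)); [intro; apply Hfx|].
    intros c Hc. apply Rlt_le, Hd1; [|exact Hv1].
    apply Rle_lt_trans with (2 := Hu1). revert Hc. unfold Rmin, Rmax.
    destruct (Rle_dec x u); split_Rabs; lra. }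
  assert (Vert : Rabs (f x v - f x y - fy x y * (v - y)) <= eps / 2 * Rabs (v - y)).
  { destruct (Req_dec v y) as [->|Hvy].
    - replace (f x y - f x y - fy x y * (y - y)) with 0 by ring.
      rewrite Rabs_R0. apply Rmult_le_pos; [lra | apply Rabs_pos].
    - assert (K := Hd2 (v - y) ltac:(lra) Hv2). replace (y + (v - y)) with v in K by ring.
      replace (f x v - f x y - fy x y * (v - y))
        with (((f x v - f x y) / (v - y) - fy x y) * (v - y)) by (field; lra).
      rewrite Rabs_mult. apply Rmult_le_compat_r; [apply Rabs_pos | lra]. }
  replace (f u v - f x y - (fx x y * (u - x) + fy x y * (v - y))) with
    ((f u v - f x v - fx x y * (u - x)) + (f x v - f x y - fy x y * (v - y))) by ring.
  eapply Rle_trans; [apply Rabs_triang|].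
  generalize (Rmax_l (Rabs (u - x)) (Rabs (v - y))) (Rmax_r (Rabs (u - x)) (Rabs (v - y))).
  generalize (cond_pos eps). nra.
Qed.

Lemma dirderiv_of_C1_partials f fx fy v : has_C1_partials f fx fy ->
  dirderiv f v (fun x y => fst v * fx x y + snd v * fy x y).
Proof.
  intros Hf x y.
  replace (fst v * fx x y + snd v * fy x y) with
    (fx (x + 0 * fst v) (y + 0 * snd v) * fst v + fy (x + 0 * fst v) (y + 0 * snd v) * snd v)
    by (rewrite !Rmult_0_l, !Rplus_0_r; ring).
  apply derivable_pt_lim_comp_2d; [apply has_C1_partials_differentiable, Hf|
    apply derivable_pt_lim_affine; intro; ring ..].
Qed.

Lemma Ck2_continuity k h : Ck2 k h -> forall x y, continuity_2d_pt h x y.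
Proof.
  revert h; induction k as [|k IH]; simpl; intros h Hh.
  - apply continuous2_iff, Hh.
  - destruct Hh as [hx [hy [Hx [Hy [Cx Cy]]]]]. intros x y.
    apply differentiable_continuity_pt. exists (hx x y), (hy x y).
    apply has_C1_partials_differentiable. repeat split; auto.
Qed.

Lemma Ck2_lincomb k g h c1 c2 :
  Ck2 k g -> Ck2 k h -> Ck2 k (fun x y => c1 * g x y + c2 * h x y).
Proof.
  revert g h; induction k as [|k IH]; simpl; intros g h Hg Hh.
  - rewrite continuous2_iff in Hg, Hh |- *. intros x y.
    apply continuity_2d_pt_plus; apply continuity_2d_pt_mult;
      auto using continuity_2d_pt_const.
  - destruct Hg as [gx [gy [Hgx [Hgy [Cgx Cgy]]]]].
    destruct Hh as [hx [hy [Hhx [Hhy [Chx Chy]]]]].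
    exists (fun x y => c1 * gx x y + c2 * hx x y), (fun x y => c1 * gy x y + c2 * hy x y).
    repeat split; auto; intros x y.
    + apply (derivable_pt_lim_plus (fun t => c1 * g t y) (fun t => c2 * h t y));
        apply (derivable_pt_lim_scal (fun t => _ t y)); auto.
    + apply (derivable_pt_lim_plus (fun t => c1 * g x t) (fun t => c2 * h x t));
        apply (derivable_pt_lim_scal (fun t => _ x t)); auto.
Qed.

Lemma partial_x_of_quotient U F Fx P Px Q Qx :
  open2 U -> is_poly2 Q ->
  (forall x y, derivable_pt_lim (fun t => F t y) x (Fx x y)) ->
  (forall x y, derivable_pt_lim (fun t => P t y) x (Px x y)) ->
  (forall x y, derivable_pt_lim (fun t => Q t y) x (Qx x y)) ->
  (forall x y, U x y -> Q x y <> 0 -> F x y = P x y / Q x y) ->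
  forall x y, U x y -> Q x y <> 0 ->
    Fx x y = (Px x y * Q x y - P x y * Qx x y) / (Q x y * Q x y).
Proof.
  intros HU hQ HF HP HQ Hrep x y Hxy HQxy.
  apply (derivable_pt_lim_quotient_loc (fun t => F t y) (fun t => P t y) (fun t => Q t y));
    auto.
  apply (locally_2d_1d_const_y (fun u v => Q u v <> 0 /\ F u v = P u v / Q u v)).
  apply locally_2d_impl with (fun u v => U u v /\ Q u v <> 0).
  { apply locally_2d_forall. intros u v [Hu Hq]. split; [exact Hq | apply Hrep; assumption]. }
  apply locally_2d_and; [apply HU, Hxy|].
  apply continuity_2d_pt_neq_0; [apply is_poly2_continuity|]; assumption.
Qed.

Lemma partial_y_of_quotient U F Fy P Py Q Qy :
  open2 U -> is_poly2 Q ->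
  (forall x y, derivable_pt_lim (fun t => F x t) y (Fy x y)) ->
  (forall x y, derivable_pt_lim (fun t => P x t) y (Py x y)) ->
  (forall x y, derivable_pt_lim (fun t => Q x t) y (Qy x y)) ->
  (forall x y, U x y -> Q x y <> 0 -> F x y = P x y / Q x y) ->
  forall x y, U x y -> Q x y <> 0 ->
    Fy x y = (Py x y * Q x y - P x y * Qy x y) / (Q x y * Q x y).
Proof.
  intros HU hQ HF HP HQ Hrep x y.
  exact (partial_x_of_quotient (fun x y => U y x) (fun x y => F y x) (fun x y => Fy y x)
    (fun x y => P y x) (fun x y => Py y x) (fun x y => Q y x) (fun x y => Qy y x)
    (open2_swap U HU) (is_poly2_swap Q hQ) (fun x y => HF y x) (fun x y => HP y x)
    (fun x y => HQ y x) (fun x y => Hrep y x) y x).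
Qed.

Lemma rational2_dircomb f fx fy c1 c2 :
  (forall x y, derivable_pt_lim (fun t => f t y) x (fx x y)) ->
  (forall x y, derivable_pt_lim (fun t => f x t) y (fy x y)) ->
  rational2 f -> rational2 (fun x y => c1 * fx x y + c2 * fy x y).
Proof.
  intros Hfx Hfy [P [Q [G [hP [hQ [hG [HG Hrep]]]]]]].
  destruct (is_poly2_partial_x P hP) as [Px [hPx HPx]].
  destruct (is_poly2_partial_y P hP) as [Py [hPy HPy]].
  destruct (is_poly2_partial_x Q hQ) as [Qx [hQx HQx]].
  destruct (is_poly2_partial_y Q hQ) as [Qy [hQy HQy]].
  assert (HU : open2 (fun x y => G x y <> 0)).
  { intros x y Hxy. apply continuity_2d_pt_neq_0; [apply is_poly2_continuity|]; assumption. }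
  assert (Hrep' : forall x y, G x y <> 0 -> Q x y <> 0 -> f x y = P x y / Q x y)
    by (intros x y Hxy _; apply Hrep, Hxy).
  exists (fun x y => c1 * (Px x y * Q x y - P x y * Qx x y)
                   + c2 * (Py x y * Q x y - P x y * Qy x y)),
         (fun x y => Q x y * Q x y), G.
  split; [poly|]. split; [poly|]. split; [exact hG|]. split; [exact HG|].
  intros x y Hxy. destruct (Hrep x y Hxy) as [HQ _].
  split; [apply Rmult_integral_contrapositive_currified; exact HQ|].
  rewrite (partial_x_of_quotient _ f fx P Px Q Qx HU hQ Hfx HPx HQx Hrep' x y Hxy HQ),
          (partial_y_of_quotient _ f fy P Py Q Qy HU hQ Hfy HPy HQy Hrep' x y Hxy HQ).
  field. exact HQ.
Qed.

Lemma regular_on_ext U g h :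
  regular_on U g -> (forall x y, U x y -> g x y = h x y) -> regular_on U h.
Proof.
  intros Hg E x y Hxy. destruct (Hg x y Hxy) as [p [q [hp [hq [hq0 Hpq]]]]].
  exists p, q. repeat split; try assumption.
  intros x' y' H' Hq'. rewrite <- (E x' y' H'). exact (Hpq x' y' H' Hq').
Qed.

Lemma regular_on_poly U p : is_poly2 p -> regular_on U p.
Proof.
  intros hp x y _. exists p, (fun _ _ => 1).
  repeat split; [exact hp | apply poly2_const | apply R1_neq_R0 | intros; field].
Qed.

Lemma regular_on_plus U g h :
  regular_on U g -> regular_on U h -> regular_on U (fun x y => g x y + h x y).
Proof.
  intros Hg Hh x y Hxy.
  destruct (Hg x y Hxy) as [p1 [q1 [hp1 [hq1 [hq1x E1]]]]].
  destruct (Hh x y Hxy) as [p2 [q2 [hp2 [hq2 [hq2x E2]]]]].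
  exists (fun x y => p1 x y * q2 x y + p2 x y * q1 x y), (fun x y => q1 x y * q2 x y).
  split; [poly|]. split; [poly|].
  split; [apply Rmult_integral_contrapositive_currified; assumption|].
  intros x' y' H' Hq. destruct (Rmult_neq_0_reg _ _ Hq) as [Hq1 Hq2].
  rewrite (E1 x' y' H' Hq1), (E2 x' y' H' Hq2). field. split; assumption.
Qed.

Lemma regular_on_mult U g h :
  regular_on U g -> regular_on U h -> regular_on U (fun x y => g x y * h x y).
Proof.
  intros Hg Hh x y Hxy.
  destruct (Hg x y Hxy) as [p1 [q1 [hp1 [hq1 [hq1x E1]]]]].
  destruct (Hh x y Hxy) as [p2 [q2 [hp2 [hq2 [hq2x E2]]]]].
  exists (fun x y => p1 x y * p2 x y), (fun x y => q1 x y * q2 x y).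
  split; [poly|]. split; [poly|].
  split; [apply Rmult_integral_contrapositive_currified; assumption|].
  intros x' y' H' Hq. destruct (Rmult_neq_0_reg _ _ Hq) as [Hq1 Hq2].
  rewrite (E1 x' y' H' Hq1), (E2 x' y' H' Hq2). field. split; assumption.
Qed.

Lemma regular_on_lincomb U g h c1 c2 : regular_on U g -> regular_on U h ->
  regular_on U (fun x y => c1 * g x y + c2 * h x y).
Proof.
  intros Hg Hh. apply regular_on_plus; apply regular_on_mult; try assumption;
    apply regular_on_poly, poly2_const.
Qed.

Lemma regular_on_swap U g :
  regular_on U g -> regular_on (fun x y => U y x) (fun x y => g y x).
Proof.
  intros Hg x y Hxy. destruct (Hg y x Hxy) as [p [q [hp [hq [hq0 Hpq]]]]].
  exists (fun x y => p y x), (fun x y => q y x).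
  repeat split; try (apply is_poly2_swap; assumption); [exact hq0|].
  intros x' y' H' Hq'. exact (Hpq y' x' H' Hq').
Qed.

Lemma regular_on_partial_x U F Fx : open2 U ->
  (forall x y, derivable_pt_lim (fun t => F t y) x (Fx x y)) ->
  regular_on U F -> regular_on U Fx.
Proof.
  intros HU HF Hreg x0 y0 H0.
  destruct (Hreg x0 y0 H0) as [P [Q [hP [hQ [hQ0 Hrep]]]]].
  destruct (is_poly2_partial_x P hP) as [Px [hPx HPx]].
  destruct (is_poly2_partial_x Q hQ) as [Qx [hQx HQx]].
  exists (fun x y => Px x y * Q x y - P x y * Qx x y), (fun x y => Q x y * Q x y).
  split; [poly|]. split; [poly|].
  split; [apply Rmult_integral_contrapositive_currified; exact hQ0|].
  intros x y Hxy HQ2. destruct (Rmult_neq_0_reg _ _ HQ2) as [HQ _].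
  exact (partial_x_of_quotient U F Fx P Px Q Qx HU hQ HF HPx HQx Hrep x y Hxy HQ).
Qed.

Lemma regular_on_partial_y U F Fy : open2 U ->
  (forall x y, derivable_pt_lim (fun t => F x t) y (Fy x y)) ->
  regular_on U F -> regular_on U Fy.
Proof.
  intros HU HF Hreg.
  exact (regular_on_swap _ _ (regular_on_partial_x _ _ (fun x y => Fy y x)
    (open2_swap _ HU) (fun x y => HF y x) (regular_on_swap _ _ Hreg))).
Qed.

(* The numerator P of u D = P/Q vanishes on the axis u = 0; writing
   P = P(0, w) + u M, the representation M Q(0, w) / (Q Q(0, w)) of D holds
   off the axis, and on it by continuity. *)
Lemma regular_on_factor_first U D :
  open2 U -> (forall w, U 0 w) -> (forall u w, continuity_2d_pt D u w) ->
  regular_on U (fun u w => u * D u w) -> regular_on U D.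
Proof.
  intros HU Haxis CD Hreg u0 w0 Hu0.
  destruct (Hreg u0 w0 Hu0) as [P [Q [hP [hQ [hQ0 HPQ]]]]].
  destruct (Req_dec u0 0) as [->|Hu0_nz].
  - destruct (is_poly2_axis_split P hP) as [M [hM HM]].
    assert (P_axis : forall w, Q 0 w <> 0 -> P 0 w = 0).
    { intros w Hw. assert (E := HPQ 0 w (Haxis w) Hw).
      replace (P 0 w) with (P 0 w / Q 0 w * Q 0 w) by (field; exact Hw).
      rewrite <- E. ring. }
    set (p := fun u w => M u w * Q 0 w).
    set (q := fun u w => Q u w * Q 0 w).
    assert (hp : is_poly2 p) by (apply poly2_mul; [|apply is_poly2_axis]; assumption).
    assert (hq : is_poly2 q) by (apply poly2_mul; [|apply is_poly2_axis]; assumption).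
    assert (off_axis : forall u w, U u w -> q u w <> 0 -> u <> 0 -> D u w = p u w / q u w).
    { intros u w Hu Hq Hu_nz. destruct (Rmult_neq_0_reg _ _ Hq) as [HQ HQ0].
      assert (E := HPQ u w Hu HQ). rewrite (HM u w), (P_axis w HQ0), Rplus_0_l in E.
      apply (Rmult_eq_reg_l u); [|exact Hu_nz]. rewrite E. unfold p, q. field.
      split; assumption. }
    exists p, q. split; [exact hp|]. split; [exact hq|].
    split; [apply Rmult_integral_contrapositive_currified; exact hQ0|].
    intros u w Hu Hq. destruct (Req_dec u 0) as [->|Hu_nz]; [|exact (off_axis u w Hu Hq Hu_nz)].
    apply (continuity_2d_pt_eq_off_line D (fun s t => p s t / q s t)); [apply CD|
      apply continuity_2d_pt_div; [apply is_poly2_continuity ..|]; assumption|].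
    apply locally_2d_impl with (fun s t => U s t /\ q s t <> 0).
    { apply locally_2d_forall. intros s t [Hs Hqs] Hs_nz. exact (off_axis s t Hs Hqs Hs_nz). }
    apply locally_2d_and; [apply HU, Hu|].
    apply continuity_2d_pt_neq_0; [apply is_poly2_continuity, hq | exact Hq].
  - exists P, (fun u w => u * Q u w). split; [exact hP|]. split; [poly|].
    split; [apply Rmult_integral_contrapositive_currified; assumption|].
    intros u w Hu Hq. destruct (Rmult_neq_0_reg _ _ Hq) as [Hu_nz HQ].
    apply (Rmult_eq_reg_l u); [|exact Hu_nz]. rewrite (HPQ u w Hu HQ). field.
    split; assumption.
Qed.

Lemma regular_on_chart1_partials U f fx fy a :
  has_C1_partials f fx fy -> open2 U -> (forall w, U 0 w) ->
  regular_on U (fun u w => f (fst a + u) (snd a + u * w)) ->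
  regular_on U (fun u w => fx (fst a + u) (snd a + u * w)) /\
  regular_on U (fun u w => fy (fst a + u) (snd a + u * w)).
Proof.
  intros Hf HU Haxis Hreg.
  assert (Df := has_C1_partials_differentiable _ _ _ Hf).
  destruct Hf as [_ [_ [Cfx Cfy]]].
  assert (Cchart : forall (g : R -> R -> R) u w, (forall x y, continuity_2d_pt g x y) ->
            continuity_2d_pt (fun s t => g (fst a + s) (snd a + s * t)) u w).
  { intros g u w Cg. apply continuity_2d_pt_comp; [exact Cg | apply is_poly2_continuity; poly ..]. }
  assert (F_u : regular_on U (fun u w => fx (fst a + u) (snd a + u * w) * 1
                                         + fy (fst a + u) (snd a + u * w) * w)).
  { refine (regular_on_partial_x _ _ _ HU _ Hreg). intros u w.
    apply (derivable_pt_lim_comp_2d f (fun t => fst a + t) (fun t => snd a + t * w));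
      [apply Df | apply derivable_pt_lim_affine; intro; ring ..]. }
  assert (F_w : regular_on U (fun u w => fx (fst a + u) (snd a + u * w) * 0
                                         + fy (fst a + u) (snd a + u * w) * u)).
  { refine (regular_on_partial_y _ _ _ HU _ Hreg). intros u w.
    apply (derivable_pt_lim_comp_2d f (fun t => fst a + u) (fun t => snd a + u * t));
      [apply Df | apply derivable_pt_lim_affine; intro; ring ..]. }
  assert (Gy : regular_on U (fun u w => fy (fst a + u) (snd a + u * w))).
  { apply regular_on_factor_first; [exact HU | exact Haxis | intros; apply Cchart, Cfy|].
    apply (regular_on_ext _ _ _ F_w). intros; ring. }
  split; [|exact Gy].
  apply (regular_on_ext U (fun u w => (fx (fst a + u) (snd a + u * w) * 1
            + fy (fst a + u) (snd a + u * w) * w) + (-1 * w) * fy (fst a + u) (snd a + u * w))).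
  - apply regular_on_plus; [exact F_u|]. apply regular_on_mult; [|exact Gy].
    apply regular_on_poly; poly.
  - intros; ring.
Qed.

Lemma regular_on_chart2_partials U f fx fy a :
  has_C1_partials f fx fy -> open2 U -> (forall u, U u 0) ->
  regular_on U (fun u w => f (fst a + u * w) (snd a + w)) ->
  regular_on U (fun u w => fx (fst a + u * w) (snd a + w)) /\
  regular_on U (fun u w => fy (fst a + u * w) (snd a + w)).
Proof.
  intros Hf HU Haxis Hreg.
  destruct (regular_on_chart1_partials (fun s t => U t s) _ _ _ (snd a, fst a)
              (has_C1_partials_swap _ _ _ Hf) (open2_swap _ HU) Haxis) as [Gy Gx].
  { apply (regular_on_ext _ _ _ (regular_on_swap _ _ Hreg)).
    intros; simpl; f_equal; ring. }
  split; [apply (regular_on_ext _ _ _ (regular_on_swap _ _ Gx))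
         |apply (regular_on_ext _ _ _ (regular_on_swap _ _ Gy))];
    intros; simpl; f_equal; ring.
Qed.

Lemma chart1_dom_open A a : open2 (chart_dom A a chart1).
Proof. apply open2_avoid; intros; apply is_poly2_continuity; simpl; poly. Qed.

Lemma chart2_dom_open A a : open2 (chart_dom A a chart2).
Proof. apply open2_avoid; intros; apply is_poly2_continuity; simpl; poly. Qed.

Lemma chart1_dom_axis A a w : chart_dom A a chart1 0 w.
Proof.
  intros b _ Hne E. apply Hne. rewrite <- E. unfold chart1.
  destruct a; simpl; f_equal; ring.
Qed.

Lemma chart2_dom_axis A a u : chart_dom A a chart2 u 0.
Proof.
  intros b _ Hne E. apply Hne. rewrite <- E. unfold chart2.
  destruct a; simpl; f_equal; ring.
Qed.

Lemma open2_not_In (A : list (R * R)) : open2 (fun x y => ~ In (x, y) A).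
Proof.
  intros x y Hxy.
  apply locally_2d_impl with (fun u v => forall b, In b A -> True -> (u, v) <> b).
  { apply locally_2d_forall. intros u v H Hin. exact (H _ Hin I eq_refl). }
  apply (open2_avoid A (fun _ => True) (fun u v => (u, v)));
    [intros; apply continuity_2d_pt_id1 | intros; apply continuity_2d_pt_id2|].
  intros b Hb _ E. apply Hxy. rewrite E. exact Hb.
Qed.

Lemma regular_after_blowup_dircomb A f fx fy c1 c2 :
  has_C1_partials f fx fy -> regular_after_blowup A f ->
  regular_after_blowup A (fun x y => c1 * fx x y + c2 * fy x y).
Proof.
  intros Hf [HA [Hout Hcharts]]. split; [exact HA|]. split.
  - destruct Hf as [Hfx [Hfy _]].
    apply regular_on_lincomb;
      [apply (regular_on_partial_x _ f) | apply (regular_on_partial_y _ f)];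
      auto using open2_not_In.
  - intros a Ha. destruct (Hcharts a Ha) as [H1 H2].
    destruct (regular_on_chart1_partials _ _ _ _ a Hf (chart1_dom_open A a)
                (chart1_dom_axis A a) H1) as [G1x G1y].
    destruct (regular_on_chart2_partials _ _ _ _ a Hf (chart2_dom_open A a)
                (chart2_dom_axis A a) H2) as [G2x G2y].
    split; apply regular_on_lincomb; assumption.
Qed.

Theorem proposition3p4 (k : nat) (f : R -> R -> R) (hf : Rk1 (S k) f)
  (v : R * R) : exists g : R -> R -> R, dirderiv f v g /\ Rk1 k g.
Proof.
  destruct hf as [[[fx [fy [Hfx [Hfy [Ckx Cky]]]]] Hrat] [A Hblowup]].
  assert (Hf : has_C1_partials f fx fy)
    by (repeat split; try assumption; apply Ck2_continuity with k; assumption).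
  exists (fun x y => fst v * fx x y + snd v * fy x y).
  split; [|split; [split|]].
  - exact (dirderiv_of_C1_partials f fx fy v Hf).
  - apply Ck2_lincomb; assumption.
  - apply (rational2_dircomb f); assumption.
  - exists A. apply (regular_after_blowup_dircomb A f); assumption.
Qed.
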